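(* Let $b\in\mathbb R$, $\omega>0$, $\mathcal B>0$, $t\ge0$, and let $\varphi(t,x,y,\eta)$ be the phase function described in the context. Then the set of solutions $(x,y,\eta)$ (with $y\ne0$, $y\wedge\eta\ne b$) of the equation $\varphi_\eta(t,x,y,\eta)=0$ is contained in the set $$\Big\{(x,y,\eta):\ x\wedge y=-\frac{\sin(\omega t)}{\omega}\,(y\wedge\eta-b)\Big\}.$$
   Context: $A(x)=\big(-b\,x_2/|x|^2,\ b\,x_1/|x|^2\big)$ for $x\ne0$; $u\wedge v=u_1v_2-u_2v_1$. The Hamiltonian is $h(x,\xi)=\frac12|\xi-A(x)|^2+\frac{\omega^2}{2}|x|^2$; for $y\ne0$, $y\wedge\eta\neq b$, $(x^t,\xi^t)=(x^t(y,\eta),\xi^t(y,\eta))$ solves $\dot x^t=\xi^t-A(x^t)$, $\dot\xi^t=-h_x(x^t,\xi^t)$, $x^0=y$, $\xi^0=\eta$. The action is $S(t,y,\eta)=\int_0^t\big(h_\xi(x^s,\xi^s)\cdot\xi^s-h(x^s,\xi^s)\big)ds$, and $\varphi(t,x,y,\eta)=S(t,y,\eta)+(x-x^t)\cdot\xi^t+i\mathcal B|x-x^t|^2/2$. $\varphi_\eta$ is the gradient in $\eta$. *)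

From Stdlib Require Import Reals.
From Coquelicot Require Import Coquelicot.
Open Scope R_scope.

Definition wedge (u v : R * R) : R := fst u * snd v - snd u * fst v.
Definition dot (u v : R * R) : R := fst u * fst v + snd u * snd v.
Definition nrm2 (u : R * R) : R := dot u u.

Definition Apot (b : R) (x : R * R) : R * R :=
  (- b * snd x / nrm2 x, b * fst x / nrm2 x).

Definition vsub (u v : R * R) : R * R := (fst u - fst v, snd u - snd v).

Definition ham (b w : R) (x xi : R * R) : R :=
  nrm2 (vsub xi (Apot b x)) / 2 + w ^ 2 * nrm2 x / 2.

(* partial derivatives, written literally as derivatives of h in each
   coordinate; h is smooth on x <> 0, where these are the true partials *)
Definition ham_x (b w : R) (x xi : R * R) : R * R :=
  (Derive (fun u => ham b w (u, snd x) xi) (fst x),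
   Derive (fun u => ham b w (fst x, u) xi) (snd x)).
Definition ham_xi (b w : R) (x xi : R * R) : R * R :=
  (Derive (fun u => ham b w x (u, snd xi)) (fst xi),
   Derive (fun u => ham b w x (fst xi, u)) (snd xi)).

Definition admissible (b : R) (y eta : R * R) : Prop :=
  y <> (0, 0) /\ wedge y eta <> b.

(* [Fl s y eta = (x^s(y,eta), xi^s(y,eta))] is the Hamiltonian flow:
   for every admissible (y,eta) the curve s |-> Fl s y eta solves
   x' = xi - A(x), xi' = - h_x(x,xi) with x^0 = y, xi^0 = eta
   (for all real times; the trajectory stays away from the origin, where
   A is singular). This solution exists and is unique. *)
Definition is_ham_flow (b w : R)
    (Fl : R -> R * R -> R * R -> (R * R) * (R * R)) : Prop :=
  forall y eta, admissible b y eta ->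
    Fl 0 y eta = (y, eta) /\
    forall s,
      fst (Fl s y eta) <> (0, 0) /\
      (let X := fun r => fst (Fl r y eta) in
       let XI := fun r => snd (Fl r y eta) in
       let V := vsub (XI s) (Apot b (X s)) in
       let G := ham_x b w (X s) (XI s) in
       is_derive (fun r => fst (X r)) s (fst V) /\
       is_derive (fun r => snd (X r)) s (snd V) /\
       is_derive (fun r => fst (XI r)) s (- fst G) /\
       is_derive (fun r => snd (XI r)) s (- snd G)).

Definition action (b w : R) Fl (t : R) (y eta : R * R) : R :=
  RInt (fun s => let X := fst (Fl s y eta) in let XI := snd (Fl s y eta) in
                 dot (ham_xi b w X XI) XI - ham b w X XI) 0 t.

Definition phase (b w BB : R) Fl (t : R) (x y eta : R * R) : C :=
  let Xt := fst (Fl t y eta) in let XIt := snd (Fl t y eta) in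
  (action b w Fl t y eta + dot (vsub x Xt) XIt,
   BB * nrm2 (vsub x Xt) / 2).

Definition phase_eta_zero (b w BB : R) Fl (t : R) (x y eta : R * R) : Prop :=
  is_derive (K := R_AbsRing) (V := C_R_NormedModule)
    (fun u => phase b w BB Fl t x y (u, snd eta)) (fst eta) (0 : C) /\
  is_derive (K := R_AbsRing) (V := C_R_NormedModule)
    (fun u => phase b w BB Fl t x y (fst eta, u)) (snd eta) (0 : C).

(* Away from the origin the Aharonov-Bohm potential is curl-free, so the kinetic
   momentum p = xi - A(x) obeys p' = -w^2 x and every trajectory is the harmonic
   ellipse x^s = y cos(ws) + q sin(ws)/w, with q = eta - A(y) and y /\ q = y /\ eta - b.
   The imaginary part of the phase is B |x - x^t|^2 / 2, whose eta-gradient is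
   -B (sin(wt)/w) (x - x^t): if sin(wt) <> 0, a critical point has x = x^t, whence
   x /\ y = -(sin(wt)/w) (y /\ q).
   If sin(wt) = 0, then x^t = cos(wt) y and xi^t = cos(wt) eta.  The action integrand
   is (|p|^2 - w^2 |x|^2)/2 + b (x /\ p)/|x|^2 = d/ds (x.p/2) + b theta', where theta
   is the polar angle of the orbit, so the action is b w t sign(y /\ q): locally
   constant in eta.  The real part of the eta-gradient then forces x = cos(wt) y,
   and both sides of the identity vanish. *)

From Stdlib Require Import Reals Lra Psatz.
From Coquelicot Require Import Coquelicot.
Open Scope R_scope.

Definition osc (w a c s : R) : R := a * cos (w * s) + c * sin (w * s) / w.
Definition osc_vel (w a c s : R) : R := c * cos (w * s) - w * a * sin (w * s).

Lemma is_derive_osc w a c s : w <> 0 -> is_derive (osc w a c) s (osc_vel w a c s).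
Proof. intros Hw; unfold osc, osc_vel; auto_derive; [easy | field; easy]. Qed.

Lemma is_derive_osc_vel w a c s : w <> 0 ->
  is_derive (osc_vel w a c) s (- w ^ 2 * osc w a c s).
Proof. intros Hw; unfold osc, osc_vel; auto_derive; [easy | field; easy]. Qed.

Lemma is_derive_zero_const (E : R -> R) :
  (forall s, is_derive E s 0) -> forall s, E s = E 0.
Proof.
intros HE s; destruct (Rtotal_order s 0) as [Hs | [-> | Hs]].
- apply (eq_is_derive E s 0); [intros; apply HE | lra].
- reflexivity.
- symmetry; apply (eq_is_derive E 0 s); [intros; apply HE | lra].
Qed.

Lemma oscillator_zero w (D V : R -> R) : w <> 0 ->
  (forall s, is_derive D s (V s)) -> (forall s, is_derive V s (- w ^ 2 * D s)) ->
  D 0 = 0 -> V 0 = 0 -> forall s, D s = 0 /\ V s = 0.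
Proof.
intros Hw dD dV D0 V0 s.
set (E r := V r ^ 2 + w ^ 2 * D r ^ 2).
assert (dE : forall r, is_derive E r 0).
{ intros r; unfold E; auto_derive.
  - repeat split; [exists (- w ^ 2 * D r) | exists (V r)]; auto.
  - rewrite (is_derive_unique (fun x : R => D x) r _ (dD r)),
      (is_derive_unique (fun x : R => V x) r _ (dV r)); ring. }
assert (Es : E s = 0) by (rewrite (is_derive_zero_const E dE s); unfold E; rewrite D0, V0; ring).
unfold E in Es; assert (0 < w ^ 2) by (apply pow2_gt_0; exact Hw).
split; apply Rsqr_0_uniq; unfold Rsqr; nra.
Qed.

Lemma oscillator_unique w a c (X P : R -> R) : w <> 0 ->
  (forall s, is_derive X s (P s)) -> (forall s, is_derive P s (- w ^ 2 * X s)) ->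
  X 0 = a -> P 0 = c -> forall s, X s = osc w a c s /\ P s = osc_vel w a c s.
Proof.
intros Hw dX dP X0 P0 s.
assert (dD : forall r, is_derive (fun r => X r - osc w a c r) r (P r - osc_vel w a c r))
  by (intros r; apply (is_derive_minus X); [apply dX | apply is_derive_osc, Hw]).
assert (dV : forall r, is_derive (fun r => P r - osc_vel w a c r) r
                         (- w ^ 2 * (X r - osc w a c r))).
{ intros r; replace (- w ^ 2 * (X r - osc w a c r))
    with (- w ^ 2 * X r - - w ^ 2 * osc w a c r) by ring.
  apply (is_derive_minus P); [apply dP | apply is_derive_osc_vel, Hw]. }
destruct (oscillator_zero w _ _ Hw dD dV) with (s := s) as [HD HV].
- rewrite X0; unfold osc; rewrite Rmult_0_r, cos_0, sin_0; field; exact Hw.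
- rewrite P0; unfold osc_vel; rewrite Rmult_0_r, cos_0, sin_0; ring.
- split; lra.
Qed.

Definition orbit (w : R) (y q : R * R) (s : R) : R * R :=
  (osc w (fst y) (fst q) s, osc w (snd y) (snd q) s).
Definition orbit_vel (w : R) (y q : R * R) (s : R) : R * R :=
  (osc_vel w (fst y) (fst q) s, osc_vel w (snd y) (snd q) s).

Lemma nrm2_neq_0 (u : R * R) : u <> (0, 0) -> nrm2 u <> 0.
Proof.
destruct u as [u1 u2]; unfold nrm2, dot; simpl; intros Hu H.
apply Hu; f_equal; nra.
Qed.

Lemma admissible_nrm2 b y eta : admissible b y eta -> nrm2 y <> 0.
Proof. intros [Hy _]; exact (nrm2_neq_0 _ Hy). Qed.

(* The Jacobian of [Apot b] is the symmetric matrix [[d, o], [o, -d]] with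
   [d = Apot_jac_diag b x] and [o = Apot_jac_off b x]: the magnetic field
   [curl A] vanishes off the origin. *)
Definition Apot_jac_diag (b : R) (x : R * R) : R := 2 * b * fst x * snd x / nrm2 x ^ 2.
Definition Apot_jac_off (b : R) (x : R * R) : R :=
  b * (snd x ^ 2 - fst x ^ 2) / nrm2 x ^ 2.

Lemma ham_x_eq b w x xi : nrm2 x <> 0 ->
  ham_x b w x xi =
  (w ^ 2 * fst x - (Apot_jac_diag b x * fst (vsub xi (Apot b x))
                    + Apot_jac_off b x * snd (vsub xi (Apot b x))),
   w ^ 2 * snd x - (Apot_jac_off b x * fst (vsub xi (Apot b x))
                    - Apot_jac_diag b x * snd (vsub xi (Apot b x)))).
Proof.
destruct x as [x1 x2], xi as [z1 z2]; unfold nrm2, dot; simpl; intros Hn.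
unfold ham_x; simpl; f_equal; apply is_derive_unique;
  unfold ham, vsub, Apot, Apot_jac_diag, Apot_jac_off, nrm2, dot; simpl;
  auto_derive; auto; field; auto.
Qed.

Lemma ham_xi_eq b w x xi : ham_xi b w x xi = vsub xi (Apot b x).
Proof.
destruct x as [x1 x2], xi as [z1 z2].
unfold ham_xi; apply injective_projections; simpl; apply is_derive_unique;
  unfold ham, vsub, Apot, nrm2, dot; simpl; auto_derive; auto;
  (* [/ |x|^2] is a constant here: no [x <> 0] side condition is needed *)
  unfold Rdiv; generalize (/ (x1 * x1 + x2 * x2)); intros k; field.
Qed.

Lemma is_derive_kinetic_momentum b w (X1 X2 Z1 Z2 : R -> R) s :
  let p r := vsub (Z1 r, Z2 r) (Apot b (X1 r, X2 r)) in
  nrm2 (X1 s, X2 s) <> 0 ->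
  is_derive X1 s (fst (p s)) -> is_derive X2 s (snd (p s)) ->
  is_derive Z1 s (- fst (ham_x b w (X1 s, X2 s) (Z1 s, Z2 s))) ->
  is_derive Z2 s (- snd (ham_x b w (X1 s, X2 s) (Z1 s, Z2 s))) ->
  is_derive (fun r => fst (p r)) s (- w ^ 2 * X1 s) /\
  is_derive (fun r => snd (p r)) s (- w ^ 2 * X2 s).
Proof.
intros p Hn dX1 dX2 dZ1 dZ2; rewrite ham_x_eq in dZ1, dZ2 by exact Hn.
unfold p, vsub, Apot, Apot_jac_diag, Apot_jac_off, nrm2, dot in *; simpl in *.
split; auto_derive.
all: try (repeat split; auto; eexists; eassumption).
all: rewrite (is_derive_unique (fun r : R => X1 r) s _ dX1),
  (is_derive_unique (fun r : R => X2 r) s _ dX2),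
  ?(is_derive_unique (fun r : R => Z1 r) s _ dZ1),
  ?(is_derive_unique (fun r : R => Z2 r) s _ dZ2); field; exact Hn.
Qed.

Lemma flow_orbit b w Fl y eta : w <> 0 -> is_ham_flow b w Fl -> admissible b y eta ->
  forall s,
  fst (Fl s y eta) = orbit w y (vsub eta (Apot b y)) s /\
  vsub (snd (Fl s y eta)) (Apot b (fst (Fl s y eta))) = orbit_vel w y (vsub eta (Apot b y)) s.
Proof.
intros Hw HFl Hadm; destruct (HFl y eta Hadm) as [Fl0 HFs].
set (q := vsub eta (Apot b y)).
set (X1 r := fst (fst (Fl r y eta))); set (X2 r := snd (fst (Fl r y eta))).
set (Z1 r := fst (snd (Fl r y eta))); set (Z2 r := snd (snd (Fl r y eta))).
set (p r := vsub (Z1 r, Z2 r) (Apot b (X1 r, X2 r))).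
assert (Hode : forall s,
  (is_derive X1 s (fst (p s)) /\ is_derive (fun r => fst (p r)) s (- w ^ 2 * X1 s)) /\
  (is_derive X2 s (snd (p s)) /\ is_derive (fun r => snd (p r)) s (- w ^ 2 * X2 s))).
{ intros s; destruct (HFs s) as [HX Hd]; cbv zeta in Hd.
  destruct Hd as (dX1 & dX2 & dZ1 & dZ2).
  destruct (is_derive_kinetic_momentum b w X1 X2 Z1 Z2 s (nrm2_neq_0 _ HX) dX1 dX2 dZ1 dZ2)
    as [dp1 dp2].
  split; split; assumption. }
assert (X10 : X1 0 = fst y) by (unfold X1; rewrite Fl0; reflexivity).
assert (X20 : X2 0 = snd y) by (unfold X2; rewrite Fl0; reflexivity).
assert (p0 : p 0 = q) by (unfold p, X1, X2, Z1, Z2; rewrite Fl0; reflexivity).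
intros s.
destruct (oscillator_unique w (fst y) (fst q) X1 (fun r => fst (p r)) Hw
  (fun r => proj1 (proj1 (Hode r))) (fun r => proj2 (proj1 (Hode r))) X10 (f_equal fst p0) s)
  as [E1 F1].
destruct (oscillator_unique w (snd y) (snd q) X2 (fun r => snd (p r)) Hw
  (fun r => proj1 (proj2 (Hode r))) (fun r => proj2 (proj2 (Hode r))) X20 (f_equal snd p0) s)
  as [E2 F2].
split; apply injective_projections; assumption.
Qed.

(* With [al ^ 2 = be ^ 2 + ga ^ 2 + de ^ 2], a primitive of
   [de / (al + be cos 2f + ga sin 2f)] without branch jumps: it differs from [f]
   by a [PI]-periodic function. *)
Definition angle_primitive (al be ga de f : R) : R :=
  f + atan ((ga * cos (2 * f) - be * sin (2 * f))
            / (al + de + be * cos (2 * f) + ga * sin (2 * f))).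

Lemma cos_sin_comb_sq be ga th :
  (be * cos th + ga * sin th) ^ 2 + (ga * cos th - be * sin th) ^ 2 = be ^ 2 + ga ^ 2.
Proof.
transitivity ((be ^ 2 + ga ^ 2) * ((sin th)² + (cos th)²)); [unfold Rsqr; ring |].
rewrite sin2_cos2; ring.
Qed.

Section AnglePrimitive.
Variables al be ga de : R.
Hypotheses (Hal : 0 <= al) (Hde : 0 < de) (Hrel : al ^ 2 = be ^ 2 + ga ^ 2 + de ^ 2).

Lemma angle_denominator_pos th : 0 < al + be * cos th + ga * sin th.
Proof.
pose proof (cos_sin_comb_sq be ga th); pose proof (pow2_ge_0 (ga * cos th - be * sin th)).
nra.
Qed.

Lemma is_derive_angle_primitive f :
  is_derive (angle_primitive al be ga de) f (de / (al + be * cos (2 * f) + ga * sin (2 * f))).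
Proof.
pose proof (angle_denominator_pos (2 * f)) as Hpos.
pose proof (cos_sin_comb_sq be ga (2 * f)) as Hid.
unfold angle_primitive; auto_derive.
{ lra. }
set (c := cos (2 * f)) in *; set (s := sin (2 * f)) in *.
set (E := be * c + ga * s) in *; set (N := ga * c - be * s) in *.
transitivity (((al + de) ^ 2 - (E ^ 2 + N ^ 2))
              / ((al + de) ^ 2 + 2 * (al + de) * E + (E ^ 2 + N ^ 2))).
- unfold E, N; field; fold E N.
  assert (0 < al + de + E) by (unfold E; lra).
  split; [apply Rgt_not_eq; pose proof (pow2_ge_0 N); nra | lra].
- rewrite Hid; replace (be ^ 2 + ga ^ 2) with (al ^ 2 - de ^ 2) by lra.
  unfold E; field; split; [lra |].
  replace ((al + de) ^ 2 + 2 * (al + de) * (be * c + ga * s) + (al ^ 2 - de ^ 2))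
    with (2 * (al + de) * (al + be * c + ga * s)) by ring.
  apply Rgt_not_eq, Rmult_lt_0_compat; lra.
Qed.

Lemma angle_primitive_half_period f :
  sin f = 0 -> angle_primitive al be ga de f - angle_primitive al be ga de 0 = f.
Proof.
intros Hs.
assert (C2 : cos (2 * f) = 1) by (rewrite cos_2a_sin, Hs; ring).
assert (S2 : sin (2 * f) = 0) by (rewrite sin_2a, Hs; ring).
unfold angle_primitive; rewrite C2, S2, !Rmult_0_r, cos_0, sin_0, !Rmult_0_r; ring.
Qed.
End AnglePrimitive.

Lemma nrm2_orbit w y q s : w <> 0 ->
  nrm2 (orbit w y q s) =
  (nrm2 y + nrm2 q / w ^ 2) / 2 + (nrm2 y - nrm2 q / w ^ 2) / 2 * cos (2 * (w * s))
  + dot y q / w * sin (2 * (w * s)).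
Proof.
intros Hw; rewrite cos_2a, sin_2a.
rewrite <- (Rmult_1_r ((nrm2 y + nrm2 q / w ^ 2) / 2)), <- (sin2_cos2 (w * s)).
destruct y, q; unfold orbit, osc, nrm2, dot, Rsqr; simpl; field; exact Hw.
Qed.

Lemma wedge_orbit w y q s : w <> 0 -> wedge (orbit w y q s) (orbit_vel w y q s) = wedge y q.
Proof.
intros Hw.
transitivity (wedge y q * ((sin (w * s))² + (cos (w * s))²)); [| rewrite sin2_cos2; ring].
destruct y, q; unfold orbit, orbit_vel, osc, osc_vel, wedge, Rsqr; simpl; field; exact Hw.
Qed.

Lemma orbit_half_period w y q s : sin (w * s) = 0 ->
  orbit w y q s = (cos (w * s) * fst y, cos (w * s) * snd y) /\
  orbit_vel w y q s = (cos (w * s) * fst q, cos (w * s) * snd q).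
Proof.
intros Hs; unfold orbit, orbit_vel, osc, osc_vel; rewrite Hs; split; f_equal; unfold Rdiv; ring.
Qed.

Lemma nrm2_ge_0 u : 0 <= nrm2 u.
Proof. destruct u; unfold nrm2, dot; simpl; nra. Qed.

Lemma sign_mul_Rabs x : sign x * Rabs x = x.
Proof.
destruct (Rtotal_order x 0) as [Hx | [-> | Hx]].
- rewrite sign_eq_m1, Rabs_left by exact Hx; ring.
- rewrite sign_0; ring.
- rewrite sign_eq_1, Rabs_pos_eq by lra; ring.
Qed.

Section OrbitAngle.
Variables (w : R) (y q : R * R).
Hypotheses (Hw : 0 < w) (HL : wedge y q <> 0).

Let al := (nrm2 y + nrm2 q / w ^ 2) / 2.
Let be := (nrm2 y - nrm2 q / w ^ 2) / 2.
Let ga := dot y q / w.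
Let de := Rabs (wedge y q) / w.

Lemma orbit_coeffs_rel : al ^ 2 = be ^ 2 + ga ^ 2 + de ^ 2.
Proof.
assert (Hde : de ^ 2 = wedge y q ^ 2 / w ^ 2)
  by (unfold de; rewrite <- (pow2_abs (wedge y q)); field; lra).
rewrite Hde; unfold al, be, ga; destruct y, q; unfold nrm2, dot, wedge; simpl; field; lra.
Qed.

Let al_nonneg : 0 <= al.
Proof.
pose proof (nrm2_ge_0 y); pose proof (nrm2_ge_0 q).
assert (0 <= nrm2 q / w ^ 2) by (apply Rdiv_le_0_compat; [lra | apply pow2_gt_0; lra]).
unfold al; lra.
Qed.

Let de_pos : 0 < de.
Proof. apply Rdiv_lt_0_compat; [apply Rabs_pos_lt |]; assumption. Qed.

Lemma nrm2_orbit_pos s : 0 < nrm2 (orbit w y q s).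
Proof.
rewrite nrm2_orbit by lra.
exact (angle_denominator_pos al be ga de al_nonneg de_pos orbit_coeffs_rel _).
Qed.

(* A continuous polar angle of [orbit w y q]. *)
Definition orbit_angle (s : R) : R := sign (wedge y q) * angle_primitive al be ga de (w * s).

Lemma is_derive_orbit_angle s :
  is_derive orbit_angle s (wedge y q / nrm2 (orbit w y q s)).
Proof.
assert (Hws : is_derive (fun s => w * s) s w) by (auto_derive; [easy | ring]).
pose proof (is_derive_comp _ _ s _ _
  (is_derive_angle_primitive al be ga de al_nonneg de_pos orbit_coeffs_rel (w * s)) Hws) as H.
apply (is_derive_scal _ _ (sign (wedge y q))) in H.
assert (Horb : nrm2 (orbit w y q s) = al + be * cos (2 * (w * s)) + ga * sin (2 * (w * s)))
  by (apply nrm2_orbit; lra).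
pose proof (nrm2_orbit_pos s) as Hpos; rewrite Horb in Hpos |- *.
rewrite <- (sign_mul_Rabs (wedge y q)) at 1.
replace (sign (wedge y q) * Rabs (wedge y q) / _) with
  (scal (sign (wedge y q)) (scal w (de / (al + be * cos (2 * (w * s)) + ga * sin (2 * (w * s)))))).
- exact H.
- unfold scal; simpl; unfold mult; simpl; unfold de; field; split; lra.
Qed.

Lemma orbit_angle_half_period s :
  sin (w * s) = 0 -> orbit_angle s - orbit_angle 0 = sign (wedge y q) * (w * s).
Proof.
intros Hs; unfold orbit_angle; rewrite Rmult_0_r, <- Rmult_minus_distr_l.
now rewrite (angle_primitive_half_period al be ga de _ Hs).
Qed.
End OrbitAngle.

Lemma cos_sq_half_period th : sin th = 0 -> cos th * cos th = 1.
Proof. intros Hs; pose proof (sin2_cos2 th) as H; rewrite Hs in H; unfold Rsqr in H; lra. Qed.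

Lemma dot_orbit_half_period w y q s :
  sin (w * s) = 0 -> dot (orbit w y q s) (orbit_vel w y q s) = dot y q.
Proof.
intros Hs; destruct (orbit_half_period w y q s Hs) as [-> ->].
pose proof (cos_sq_half_period _ Hs) as Hc.
transitivity (cos (w * s) * cos (w * s) * dot y q); [unfold dot; simpl; ring |].
rewrite Hc; ring.
Qed.

Lemma is_derive_orbit_dot w y q s : w <> 0 ->
  is_derive (fun s => dot (orbit w y q s) (orbit_vel w y q s)) s
    (nrm2 (orbit_vel w y q s) - w ^ 2 * nrm2 (orbit w y q s)).
Proof.
intros Hw; unfold orbit, orbit_vel, osc, osc_vel, nrm2, dot; simpl.
auto_derive; [repeat split; exact Hw | field; exact Hw].
Qed.

Lemma wedge_kinetic b y eta : nrm2 y <> 0 -> wedge y (vsub eta (Apot b y)) = wedge y eta - b.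
Proof.
destruct y, eta; unfold wedge, vsub, Apot, nrm2, dot; simpl; intros Hy; field; exact Hy.
Qed.

Lemma action_integrand_eq b w x xi : nrm2 x <> 0 ->
  dot (ham_xi b w x xi) xi - ham b w x xi =
  (nrm2 (vsub xi (Apot b x)) - w ^ 2 * nrm2 x) / 2 + b * wedge x (vsub xi (Apot b x)) / nrm2 x.
Proof.
intros Hx; rewrite ham_xi_eq; destruct x, xi; revert Hx.
unfold ham, wedge, vsub, Apot, nrm2, dot; simpl; intros Hx; field; exact Hx.
Qed.

Lemma action_half_period b w Fl t y eta :
  0 < w -> is_ham_flow b w Fl -> admissible b y eta -> sin (w * t) = 0 ->
  action b w Fl t y eta = b * sign (wedge y eta - b) * (w * t).
Proof.
intros Hw HFl Hadm Hs; assert (Hw0 : w <> 0) by lra.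
assert (Hy : nrm2 y <> 0) by exact (admissible_nrm2 _ _ _ Hadm).
set (q := vsub eta (Apot b y)).
assert (HL : wedge y q = wedge y eta - b) by exact (wedge_kinetic b y eta Hy).
assert (HL0 : wedge y q <> 0) by (rewrite HL; apply Rminus_eq_contra, Hadm).
set (g s := / 2 * (nrm2 (orbit_vel w y q s) - w ^ 2 * nrm2 (orbit w y q s))
            + b * (wedge y q / nrm2 (orbit w y q s))).
set (G s := / 2 * dot (orbit w y q s) (orbit_vel w y q s) + b * orbit_angle w y q s).
assert (dG : forall s, is_derive G s (g s)).
{ intros s; apply (is_derive_plus (fun s => / 2 * dot (orbit w y q s) (orbit_vel w y q s))
                                   (fun s => b * orbit_angle w y q s));
  apply is_derive_scal; [apply is_derive_orbit_dot, Hw0 | apply is_derive_orbit_angle; assumption]. }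
assert (cg : forall s, continuous g s).
{ intros s; pose proof (nrm2_orbit_pos w y q Hw HL0 s) as Hpos.
  apply (ex_derive_continuous (V := R_NormedModule)).
  unfold g; unfold orbit, orbit_vel, osc, osc_vel, nrm2, dot in *; simpl in *.
  auto_derive; repeat split; lra. }
unfold action; rewrite (RInt_ext _ g).
- rewrite (is_RInt_unique _ _ _ _ (is_RInt_derive G g 0 t (fun s _ => dG s) (fun s _ => cg s))).
  assert (Hs0 : sin (w * 0) = 0) by (rewrite Rmult_0_r; exact sin_0).
  transitivity (b * (orbit_angle w y q t - orbit_angle w y q 0)).
  + unfold minus, plus, opp, G; simpl.
    rewrite (dot_orbit_half_period _ _ _ _ Hs), (dot_orbit_half_period _ _ _ _ Hs0); ring.
  + rewrite orbit_angle_half_period, HL by assumption; ring.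
- intros s _; lazymatch goal with |- ?u = _ => change (u = g s :> R) end.
  destruct (flow_orbit b w Fl y eta Hw0 HFl Hadm s) as [Ex Ep].
  assert (Hx : nrm2 (fst (Fl s y eta)) <> 0)
    by (rewrite Ex; apply Rgt_not_eq, nrm2_orbit_pos; assumption).
  cbv zeta; rewrite (action_integrand_eq _ _ _ _ Hx), Ep, Ex, (wedge_orbit _ _ _ _ Hw0).
  unfold g, q; unfold Rdiv; ring.
Qed.

Lemma phase_im_eq b w BB Fl t x y eta :
  w <> 0 -> is_ham_flow b w Fl -> admissible b y eta ->
  snd (phase b w BB Fl t x y eta) = BB * nrm2 (vsub x (orbit w y (vsub eta (Apot b y)) t)) / 2.
Proof.
intros Hw HFl Hadm; destruct (flow_orbit b w Fl y eta Hw HFl Hadm t) as [Ex _].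
unfold phase; simpl; rewrite Ex; reflexivity.
Qed.

Lemma phase_re_half_period b w BB Fl t x y eta :
  0 < w -> is_ham_flow b w Fl -> admissible b y eta -> sin (w * t) = 0 ->
  fst (phase b w BB Fl t x y eta) =
  b * sign (wedge y eta - b) * (w * t)
  + dot (vsub x (cos (w * t) * fst y, cos (w * t) * snd y))
        (cos (w * t) * fst eta, cos (w * t) * snd eta).
Proof.
intros Hw HFl Hadm Hs.
assert (Hy : nrm2 y <> 0) by exact (admissible_nrm2 _ _ _ Hadm).
pose proof (cos_sq_half_period _ Hs) as Hc.
destruct (flow_orbit b w Fl y eta (Rgt_not_eq _ _ Hw) HFl Hadm t) as [Ex Ep].
destruct (orbit_half_period w y (vsub eta (Apot b y)) t Hs) as [Ox Ov].
rewrite Ox in Ex; rewrite Ov, Ex in Ep.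
unfold phase; simpl; rewrite (action_half_period b w Fl t y eta Hw HFl Hadm Hs), Ex.
f_equal; f_equal.
destruct (snd (Fl t y eta)) as [z1 z2], y as [y1 y2], eta as [e1 e2].
revert Ep Hy; unfold vsub, Apot, nrm2, dot; simpl; intros Ep Hy.
injection Ep as E1 E2.
assert (Hn : cos (w * t) * y1 * (cos (w * t) * y1) + cos (w * t) * y2 * (cos (w * t) * y2)
             = y1 * y1 + y2 * y2)
  by (transitivity (cos (w * t) * cos (w * t) * (y1 * y1 + y2 * y2)); [ring | rewrite Hc; ring]).
rewrite Hn in E1, E2.
f_equal; lazymatch goal with
  E : ?z - ?u = ?v |- ?z = _ => replace z with (v + u) by lra; field; exact Hy
end.
Qed.

Lemma is_derive_C_zero (f : R -> C) u :
  is_derive (K := R_AbsRing) (V := C_R_NormedModule) f u (0 : C) ->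
  is_derive (fun r => fst (f r)) u 0 /\ is_derive (fun r => snd (f r)) u 0.
Proof.
intros H; unfold is_derive in *; split; eapply filterdiff_ext_lin.
- apply (filterdiff_comp' (V := prod_NormedModule R_AbsRing R_NormedModule R_NormedModule)
           f fst u _ fst H), filterdiff_linear, is_linear_fst.
- intros h; simpl; unfold scal; simpl; unfold prod_scal, mult; simpl; unfold mult; simpl; ring.
- apply (filterdiff_comp' (V := prod_NormedModule R_AbsRing R_NormedModule R_NormedModule)
           f snd u _ snd H), filterdiff_linear, is_linear_snd.
- intros h; simpl; unfold scal; simpl; unfold prod_scal, mult; simpl; unfold mult; simpl; ring.
Qed.

Lemma is_derive_locally_unique (f g : R -> R) u l m :
  locally u (fun r => f r = g r) -> is_derive f u l -> is_derive g u m -> l = m.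
Proof.
intros Hfg Hf Hg; apply (is_derive_ext_loc _ _ _ _ Hfg) in Hf.
rewrite <- (is_derive_unique _ _ _ Hf); exact (is_derive_unique _ _ _ Hg).
Qed.

Lemma locally_same_sign (f : R -> R) u :
  continuous f u -> f u <> 0 -> locally u (fun r => 0 < f r * f u).
Proof.
intros Hf Hu; apply (Hf (fun z => 0 < z * f u)); exists (mkposreal _ (Rabs_pos_lt _ Hu)); intros z Hz.
change (Rabs (z - f u) < Rabs (f u)) in Hz.
apply Rabs_def2 in Hz; destruct (Rcase_abs (f u)).
- rewrite (Rabs_left (f u)) in Hz by assumption; nra.
- rewrite (Rabs_pos_eq (f u)) in Hz by lra; assert (0 < f u) by lra; nra.
Qed.

Lemma sign_same_side a c : 0 < a * c -> sign a = sign c.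
Proof.
intros H; destruct (Rtotal_order a 0) as [Ha | [Ha | Ha]].
- rewrite !sign_eq_m1; nra.
- subst; lra.
- rewrite !sign_eq_1; nra.
Qed.

Lemma admissible_same_side b y eta eta' :
  admissible b y eta -> 0 < (wedge y eta' - b) * (wedge y eta - b) -> admissible b y eta'.
Proof. intros [Hy _] H; split; [exact Hy | intros E; rewrite E in H; lra]. Qed.

Lemma locally_same_side b y e1 e2 : admissible b y (e1, e2) ->
  locally e1 (fun u => 0 < (wedge y (u, e2) - b) * (wedge y (e1, e2) - b)) /\
  locally e2 (fun u => 0 < (wedge y (e1, u) - b) * (wedge y (e1, e2) - b)).
Proof.
intros [_ HL]; apply Rminus_eq_contra in HL.
split; [apply (locally_same_sign (fun u => wedge y (u, e2) - b))
       | apply (locally_same_sign (fun u => wedge y (e1, u) - b))]; try exact HL;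
  apply (ex_derive_continuous (V := R_NormedModule)); unfold wedge; simpl; auto_derive; easy.
Qed.

Lemma phase_eta_zero_half_period b w BB Fl t x y eta :
  0 < w -> is_ham_flow b w Fl -> admissible b y eta -> sin (w * t) = 0 ->
  phase_eta_zero b w BB Fl t x y eta -> x = (cos (w * t) * fst y, cos (w * t) * snd y).
Proof.
intros Hw HFl Hadm Hs [H1 H2].
apply is_derive_C_zero in H1 as [Re1 _]; apply is_derive_C_zero in H2 as [Re2 _].
destruct eta as [e1 e2], x as [x1 x2]; simpl in *.
destruct (locally_same_side b y e1 e2 Hadm) as [N1 N2].
set (c := cos (w * t)); set (sg := sign (wedge y (e1, e2) - b)).
assert (Hre : forall eta', 0 < (wedge y eta' - b) * (wedge y (e1, e2) - b) ->
  fst (phase b w BB Fl t (x1, x2) y eta') =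
  b * sg * (w * t) + dot (vsub (x1, x2) (c * fst y, c * snd y)) (c * fst eta', c * snd eta')).
{ intros eta' H; rewrite (phase_re_half_period b w BB Fl t _ y eta' Hw HFl) by
    (exact Hs || exact (admissible_same_side _ _ _ _ Hadm H)).
  now rewrite (sign_same_side _ _ H). }
assert (Z1 : 0 = c * (x1 - c * fst y)).
{ apply (is_derive_locally_unique (fun u => fst (phase b w BB Fl t (x1, x2) y (u, e2)))
    (fun u => b * sg * (w * t) + dot (vsub (x1, x2) (c * fst y, c * snd y)) (c * u, c * e2)) e1).
  - revert N1; apply filter_imp; intros u Hu; exact (Hre _ Hu).
  - exact Re1.
  - unfold dot, vsub; simpl; auto_derive; [easy | ring]. }
assert (Z2 : 0 = c * (x2 - c * snd y)).
{ apply (is_derive_locally_unique (fun u => fst (phase b w BB Fl t (x1, x2) y (e1, u)))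
    (fun u => b * sg * (w * t) + dot (vsub (x1, x2) (c * fst y, c * snd y)) (c * e1, c * u)) e2).
  - revert N2; apply filter_imp; intros u Hu; exact (Hre _ Hu).
  - exact Re2.
  - unfold dot, vsub; simpl; auto_derive; [easy | ring]. }
assert (Hc : c <> 0) by (pose proof (cos_sq_half_period _ Hs) as Hc; fold c in Hc; nra).
apply eq_sym, Rmult_integral in Z1, Z2; f_equal; lra.
Qed.

Lemma phase_eta_zero_flow_position b w BB Fl t x y eta :
  0 < w -> 0 < BB -> is_ham_flow b w Fl -> admissible b y eta -> sin (w * t) <> 0 ->
  phase_eta_zero b w BB Fl t x y eta -> x = orbit w y (vsub eta (Apot b y)) t.
Proof.
intros Hw HBB HFl Hadm Hs [H1 H2]; assert (Hw0 : w <> 0) by lra.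
assert (Hy : nrm2 y <> 0) by exact (admissible_nrm2 _ _ _ Hadm).
apply is_derive_C_zero in H1 as [_ Im1]; apply is_derive_C_zero in H2 as [_ Im2].
destruct eta as [e1 e2], x as [x1 x2]; simpl in *.
destruct (locally_same_side b y e1 e2 Hadm) as [N1 N2].
assert (Him : forall eta', 0 < (wedge y eta' - b) * (wedge y (e1, e2) - b) ->
  snd (phase b w BB Fl t (x1, x2) y eta') =
  BB * nrm2 (vsub (x1, x2) (orbit w y (vsub eta' (Apot b y)) t)) / 2).
{ intros eta' H; apply phase_im_eq; [lra | exact HFl | exact (admissible_same_side _ _ _ _ Hadm H)]. }
set (k := - BB * sin (w * t) / w).
assert (Z1 : 0 = k * (x1 - fst (orbit w y (vsub (e1, e2) (Apot b y)) t))).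
{ apply (is_derive_locally_unique (fun u => snd (phase b w BB Fl t (x1, x2) y (u, e2)))
    (fun u => BB * nrm2 (vsub (x1, x2) (orbit w y (vsub (u, e2) (Apot b y)) t)) / 2) e1).
  - revert N1; apply filter_imp; intros u Hu; exact (Him _ Hu).
  - exact Im1.
  - unfold k, nrm2, dot, vsub, orbit, osc; simpl; auto_derive; [easy | field; split; assumption]. }
assert (Z2 : 0 = k * (x2 - snd (orbit w y (vsub (e1, e2) (Apot b y)) t))).
{ apply (is_derive_locally_unique (fun u => snd (phase b w BB Fl t (x1, x2) y (e1, u)))
    (fun u => BB * nrm2 (vsub (x1, x2) (orbit w y (vsub (e1, u) (Apot b y)) t)) / 2) e2).
  - revert N2; apply filter_imp; intros u Hu; exact (Him _ Hu).
  - exact Im2.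
  - unfold k, nrm2, dot, vsub, orbit, osc; simpl; auto_derive; [easy | field; split; assumption]. }
assert (Hk : k <> 0).
{ unfold k, Rdiv; apply Rmult_integral_contrapositive_currified;
    [apply Rmult_integral_contrapositive_currified; [lra | exact Hs] | apply Rinv_neq_0_compat, Hw0]. }
apply eq_sym, Rmult_integral in Z1, Z2; unfold orbit in *; simpl in *; f_equal; lra.
Qed.

Theorem proposition3p4 (b w BB t : R)
    (Fl : R -> R * R -> R * R -> (R * R) * (R * R)) :
  0 < w -> 0 < BB -> 0 <= t ->
  is_ham_flow b w Fl ->
  forall x y eta : R * R,
    admissible b y eta ->
    phase_eta_zero b w BB Fl t x y eta ->
    wedge x y = - (sin (w * t) / w) * (wedge y eta - b).
Proof.
intros Hw HBB _ HFl x y eta Hadm Hphase.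
destruct (Req_dec (sin (w * t)) 0) as [Hs | Hs].
- rewrite (phase_eta_zero_half_period b w BB Fl t x y eta Hw HFl Hadm Hs Hphase), Hs.
  unfold wedge; simpl; unfold Rdiv; ring.
- assert (Hy : nrm2 y <> 0) by exact (admissible_nrm2 _ _ _ Hadm).
  rewrite (phase_eta_zero_flow_position b w BB Fl t x y eta Hw HBB HFl Hadm Hs Hphase),
    <- (wedge_kinetic b y eta Hy).
  destruct y; unfold orbit, osc, wedge; simpl; field; lra.
Qed.
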